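(* Let $N$ be a temporal phylogenetic network. Then $N$ is tree-based if and only if $N$ satisfies the antichain-to-leaf property.
   Context: $X$ is a nonempty finite set. A phylogenetic network on $X$ is a rooted acyclic digraph with no parallel arcs such that: the unique root has out-degree at least one; $X$ is exactly the set of vertices of out-degree zero (leaves), each of in-degree one; every other vertex either has in-degree one and out-degree at least two (a tree vertex) or in-degree at least two and out-degree one (a reticulation). If $|X|=1$, the network may also consist of the single vertex in $X$. An arc ending in a reticulation is a reticulation arc; all other arcs are tree arcs. A phylogenetic network $N$ on $X$ is tree-based if it can be obtained from some phylogenetic $X$-tree (phylogenetic network with no reticulations) $T$ by first taking a subdivision of $T$ (new vertices are attachment points) and then adding new arcs $(u,v)$ where either $u$ and $v$ are both attachment points, or $u$ is a non-leaf vertex of $T$ and $v$ is an attachment point; equivalently, $N$ has a rooted spanning tree with the same root as $N$ all of whose leaves lie in $X$. $N=(V,A)$ is temporal if there is a map $\lambda:V\to\mathbb{R}$ with $\lambda(u)<\lambda(v)$ for every tree arc $(u,v)$ and $\lambda(u)=\lambda(v)$ for every reticulation arc $(u,v)$. An antichain is a set of vertices no two of which are joined by a directed path. $N$ satisfies the antichain-to-leaf property if for every antichain of $k$ vertices there exist $k$ vertex-disjoint directed paths from the elements of the antichain to leaves of $N$. *)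

From Stdlib Require Import Reals.
From mathcomp Require Import all_boot.
Set Implicit Arguments. Unset Strict Implicit. Unset Printing Implicit Defensive.

(* A directed graph without parallel arcs: a finite vertex type V and an arc
   relation E (E u v  <=>  (u,v) is an arc). *)
Section Net.
Variables (V : finType) (E : rel V).

Definition indeg (v : V) : nat := #|[set u | E u v]|.
Definition outdeg (v : V) : nat := #|[set w | E v w]|.

Definition is_leaf (v : V) : bool := outdeg v == 0.

Definition acyclic : Prop := forall u v, E u v -> ~~ connect E v u.

Definition phylo_network (r : V) : Prop :=
  acyclic /\
  ( (* the trivial network consisting of a single leaf *)
    (#|V| = 1 /\ forall u v, ~~ E u v)
  \/
    (indeg r = 0 /\ 1 <= outdeg r /\
     forall v, v != r ->
       1 <= indeg v /\
          ((indeg v = 1 /\ outdeg v = 0)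
           \/ (indeg v = 1 /\ 2 <= outdeg v)
           \/ (2 <= indeg v /\ outdeg v = 1))) ).

Definition reticulation (v : V) : bool := 2 <= indeg v.

Definition temporal : Prop :=
  exists lam : V -> R,
    forall u v, E u v ->
      (reticulation v -> lam u = lam v) /\ (~~ reticulation v -> Rlt (lam u) (lam v)).

(* tree-based: a rooted spanning tree (arc subset F) with root r all of whose
   leaves are leaves of N *)
Definition tree_based (r : V) : Prop :=
  exists F : rel V,
    [/\ subrel F E,
        forall v, v != r -> #|[set u | F u v]| = 1,
        forall v, connect F r v
      & forall v, [set w | F v w] == set0 -> is_leaf v].

Definition antichain (A : {set V}) : Prop :=
  forall u v, u \in A -> v \in A -> u != v -> ~~ connect E u v.

Definition antichain_to_leaf : Prop :=
  forall A : {set V}, antichain A ->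
    exists p : V -> seq V,
      (forall a, a \in A -> path E a (p a) /\ is_leaf (last a (p a))) /\
      (forall a b, a \in A -> b \in A -> a != b ->
         forall x, x \in a :: p a -> x \notin b :: p b).
End Net.

From Stdlib Require Import Reals Lra ROrderedType.
From mathcomp Require Import all_boot zify.
Set Implicit Arguments. Unset Strict Implicit. Unset Printing Implicit Defensive.

(* Both properties are equivalent to the existence of a [child_map], an
   injective choice of one child for every non-leaf vertex.  A spanning tree
   gives one by choosing tree children; conversely the arcs (u, s u), plus an
   arbitrary parent arc for every vertex outside the image of s, form a
   spanning tree; and following s from the elements of an antichain gives
   vertex-disjoint paths to leaves.
   It remains to build a child map from the antichain-to-leaf property.  A
   reticulation keeps its unique child (two reticulations with a common child
   would contradict the property) and a tree vertex with a tree child takes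
   it.  The tree vertices whose children are all reticulations are matched,
   by Hall's theorem, to the heads of the reticulation chains below them.
   Time is constant along such arcs and chains, so Hall's condition can be
   checked on one time level t: a set S at level t together with the set Q
   of heads at level t without a parent in S is an antichain, and its
   disjoint leaf paths enter reticulation chains with pairwise distinct
   heads, each in Q or a neighbour of S; hence |S| + |Q| <= |Q| + |N(S)|. *)

Section HallMarriage.
Variable T : finType.
Implicit Types (G : rel T) (S X Y : {set T}).

Definition neighbours G S : {set T} := [set w | [exists u in S, G u w]].

Lemma neighboursP G S w : reflect (exists2 u, u \in S & G u w) (w \in neighbours G S).
Proof.
rewrite inE; apply: (iffP existsP) => [[u /andP[]]|[u Su Guw]]; first by exists u.
by exists u; rewrite Su.
Qed.

Lemma neighboursU G S1 S2 : neighbours G (S1 :|: S2) = neighbours G S1 :|: neighbours G S2.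
Proof.
apply/setP => w; rewrite in_setU; apply/neighboursP/orP.
  by case=> u; rewrite in_setU => /orP[] Su Guw; [left|right]; apply/neighboursP; exists u.
by case=> /neighboursP[u Su Guw]; exists u; rewrite // in_setU Su ?orbT.
Qed.

Definition hall_condition G X := forall S, S \subset X -> #|S| <= #|neighbours G S|.

Definition matching G X (m : T -> T) :=
  (forall u, u \in X -> G u (m u)) /\ {in X &, injective m}.

Definition avoiding G Y : rel T := [rel u w | G u w && (w \notin Y)].

Lemma matching0 G : matching G set0 id.
Proof. by split=> [u|u v]; rewrite inE. Qed.

Lemma matching_glue G S X m1 m2 : matching G S m1 -> matching G (X :\: S) m2 ->
  (forall u v, u \in S -> v \in X :\: S -> m1 u != m2 v) ->
  matching G X (fun u => if u \in S then m1 u else m2 u).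
Proof.
move=> [Gm1 inj_m1] [Gm2 inj_m2] m12; split=> [u Xu|u v Xu Xv /=].
  by case: ifP => Su; [apply: Gm1 | apply: Gm2; rewrite inE Su].
have XSP w : w \in X -> w \notin S -> w \in X :\: S by move=> Xw /negPf Sw; rewrite inE Sw.
case: ifPn => Su; case: ifPn => Sv.
- exact: inj_m1.
- by move=> eq_m; have := m12 u v Su (XSP v Xv Sv); rewrite eq_m eqxx.
- by move=> eq_m; have := m12 v u Sv (XSP u Xu Su); rewrite eq_m eqxx.
- by apply: inj_m2; apply: XSP.
Qed.

Lemma matching_avoiding G Y X m :
  matching (avoiding G Y) X m -> matching G X m /\ forall u, u \in X -> m u \notin Y.
Proof. by case=> Gm inj_m; split=> [|u /Gm /andP[]//]; split=> // u /Gm /andP[]. Qed.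

Section HallStep.
Variable n : nat.
Hypothesis IH : forall G X, #|X| <= n -> hall_condition G X -> exists m, matching G X m.
Variables (G : rel T) (X : {set T}).
Hypotheses (leX : #|X| <= n.+1) (hallX : hall_condition G X).

(* Because S0 is tight, Hall's condition for X :\: S0 survives the removal of
   the neighbours of S0 from the graph. *)
Lemma hall_tight_step S0 : S0 \proper X -> S0 != set0 ->
  #|neighbours G S0| <= #|S0| -> exists m, matching G X m.
Proof.
move=> ltS0X S0n0 tightS0; have leS0X := proper_sub ltS0X.
have [m1 m1S0] : exists m, matching G S0 m.
  apply: IH; first by rewrite -ltnS (leq_trans (proper_card ltS0X)).
  by move=> S sS; apply: hallX (subset_trans sS leS0X).
pose N0 := neighbours G S0; pose G2 := avoiding G N0.
have [m2 /matching_avoiding[m2X m2N0]] : exists m, matching G2 (X :\: S0) m.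
  apply: IH.
    have := proper_card ltS0X; have := cardsDS leS0X; rewrite -card_gt0 in S0n0; lia.
  move=> S sS; have disjS : S :&: S0 = set0.
    apply/setP => x; rewrite !inE; apply/negbTE/andP => -[Sx S0x].
    by move/subsetP: sS => /(_ x Sx); rewrite inE S0x.
  have := @hallX (S :|: S0); rewrite subUset leS0X (subset_trans sS (subsetDl _ _)).
  rewrite cardsU disjS cards0 subn0 neighboursU => /(_ isT).
  have -> : neighbours G S :|: N0 = neighbours G2 S :|: N0.
    apply/setP => w; rewrite !in_setU; case: (boolP (w \in N0)); rewrite ?orbT // !orbF.
    move=> N0w; apply/neighboursP/neighboursP => -[u Su Guw]; exists u => //.
      by rewrite /G2 /avoiding /= Guw N0w.
    exact: (andP Guw).1.
  by have := leq_card_setU (neighbours G2 S) N0; case; move: tightS0; rewrite -/N0; lia.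
exists (fun u => if u \in S0 then m1 u else m2 u); apply: matching_glue => // u v S0u Xv.
have := m2N0 v Xv; apply: contra => /eqP <-.
by apply/neighboursP; exists u => //; apply: m1S0.1.
Qed.

(* When every nonempty proper subset has a surplus neighbour, removing one
   vertex y from the graph keeps Hall's condition for X :\ x. *)
Lemma hall_slack_step : (forall S, S \proper X -> S != set0 -> #|S| < #|neighbours G S|) ->
  exists m, matching G X m.
Proof.
move=> slackX; have [->|[x Xx]] := set_0Vmem X; first by exists id; apply: matching0.
have := @hallX [set x]; rewrite sub1set Xx cards1 card_gt0 => /(_ isT) /set0Pn[y].
move=> /neighboursP[_ /set1P -> Gxy].
have [m /matching_avoiding[mX my]] : exists m, matching (avoiding G [set y]) (X :\ x) m.
  apply: IH; first by rewrite -ltnS (leq_trans _ leX) // (cardsD1 x X) Xx setDE.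
  move=> S sS; have [->|[z Sz]] := set_0Vmem S; first by rewrite cards0.
  have ltSX : S \proper X.
    rewrite properE (subset_trans sS (subsetDl _ _)); apply/subsetPn; exists x => //.
    by apply/negP => /(subsetP sS); rewrite !inE eqxx.
  have Sn0 : S != set0 by apply/set0Pn; exists z.
  have := slackX S ltSX Sn0.
  have : neighbours G S :\ y \subset neighbours (avoiding G [set y]) S.
    apply/subsetP => w; rewrite in_setD1 => /andP[wy /neighboursP[u Su Guw]].
    by apply/neighboursP; exists u; rewrite // /avoiding /= Guw inE wy.
  by move/subset_leq_card; rewrite (cardsD1 y (neighbours G S)); case: (_ \in _) => /=; lia.
exists (fun u => if u \in [set x] then y else m u); apply: matching_glue => //.
- by split=> [u /set1P -> //|u v /set1P -> /set1P ->].
- by move=> u v _ /my; rewrite inE eq_sym.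
Qed.
End HallStep.

Theorem hall_marriage G X : hall_condition G X -> exists m, matching G X m.
Proof.
move: {2}#|X| (leqnn #|X|) => n; elim: n G X => [|n IH] G X leX hallX.
  by move: leX; rewrite leqn0 cards_eq0 => /eqP ->; exists id; apply: matching0.
case: (boolP [exists S0 : {set T},
               [&& S0 \proper X, S0 != set0 & #|neighbours G S0| <= #|S0|]]).
  case/existsP=> S0 /and3P[ltS0X S0n0 tightS0].
  exact: (hall_tight_step IH leX hallX ltS0X S0n0 tightS0).
rewrite negb_exists => /forallP slackX; apply: (hall_slack_step IH leX hallX) => S ltSX S0.
by have := slackX S; rewrite ltSX S0 /= ltnNge.
Qed.
End HallMarriage.

Section PhyloNetwork.
Variables (V : finType) (E : rel V) (r : V).
Hypothesis net : phylo_network E r.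

Lemma phylo_arc_neq_root u w : E u w -> w != r.
Proof.
case: net => _ [[_ noE]|[in_r _]]; first by rewrite (negbTE (noE u w)).
move=> Euw; apply/eqP => wr; move: in_r; rewrite -wr /indeg => /eqP.
by rewrite cards_eq0 => /eqP /setP /(_ u); rewrite !inE Euw.
Qed.

Lemma phylo_parent v : v != r -> exists u, E u v.
Proof.
case: net => _ [[cardV _] vr|[_ [_ degs]] /degs[]].
  have /card_le1_eqP one : #|[pred x : V | true]| <= 1 by rewrite -cardV subset_leq_card.
  by rewrite (one v r) ?eqxx in vr.
by rewrite /indeg card_gt0 => /set0Pn[u]; rewrite inE; exists u.
Qed.

Lemma phylo_reticulation_child v w1 w2 : reticulation E v -> E v w1 -> E v w2 -> w1 = w2.
Proof.
rewrite /reticulation; case: net => _ [[_ noE]|[in_r [_ degs]]] ret_v vw1 vw2.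
  by rewrite (negbTE (noE v w1)) in vw1.
have outv : outdeg E v <= 1.
  have [vr|/degs[_ [[iv _]|[[iv _]|[_ -> //]]]]] := eqVneq v r.
  - by rewrite vr in_r in ret_v.
  - by rewrite iv in ret_v.
  - by rewrite iv in ret_v.
by apply: (card_le1_eqP outv); rewrite inE.
Qed.
End PhyloNetwork.

Section Graph.
Variables (V : finType) (E : rel V).

Lemma nonleafP v : reflect (exists w, E v w) (~~ is_leaf E v).
Proof.
rewrite /is_leaf /outdeg cards_eq0; apply: (iffP (set0Pn _)) => [[w]|[w Evw]].
  by rewrite inE; exists w.
by exists w; rewrite inE.
Qed.

Lemma connect_split_last x v : connect E x v -> x != v -> exists2 y, connect E x y & E y v.
Proof.
move=> /connectP[p Ep ->]; elim/last_ind: p Ep => [|q y _] /=; first by rewrite eqxx.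
rewrite rcons_path last_rcons => /andP[Eq Ey] _.
by exists (last x q) => //; apply/connectP; exists q.
Qed.

Lemma connect_split_first x v : connect E x v -> x != v -> exists2 y, E x y & connect E y v.
Proof.
move=> /connectP[[|y p] /= Ep ->]; first by rewrite eqxx.
by case/andP: Ep => Exy Ep _; exists y => //; apply/connectP; exists p.
Qed.

Lemma leaf_path_start a p : path E a p -> is_leaf E (last a p) -> ~~ is_leaf E a ->
  exists w q, p = w :: q /\ E a w.
Proof. by case: p => [|w q] /= => [_ ->|/andP[Eaw _] _ _]; last exists w, q. Qed.

Lemma leaf_path_next a p u : path E a p -> is_leaf E (last a p) -> u \in a :: p ->
  ~~ is_leaf E u -> exists2 w, E u w & w \in p.
Proof.
elim: p a => [|b p IH] a /=; first by move=> _ leaf_a /[!inE] /eqP ->; rewrite leaf_a.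
case/andP=> Eab Ep leaf_last /[!inE] /orP[/eqP -> _|pu nleaf_u].
  by exists b; rewrite ?inE ?eqxx.
by have [w Euw pw] := IH b Ep leaf_last pu nleaf_u; exists w; rewrite // inE pw orbT.
Qed.

Lemma connect_functional_total (C : rel V) :
  (forall u w1 w2, C u w1 -> C u w2 -> w1 = w2) ->
  forall h x y, connect C h x -> connect C h y -> connect C x y || connect C y x.
Proof.
move=> C_fun h x y /connectP[p Cp ->]; elim: p h Cp => [|z p IH] h /=; first by move=> _ ->.
case/andP=> Chz Cp Chy; have [<-|hy] := eqVneq h y.
  by apply/orP; right; apply/connectP; exists (z :: p) => //=; rewrite Chz.
case/connectP: Chy => -[|z' q] /= Cq y_q; first by rewrite y_q eqxx in hy.
case/andP: Cq => /(C_fun _ _ _ Chz) z_z' Cq; subst z'.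
by apply: IH => //; apply/connectP; exists q.
Qed.

Section Acyclic.
Hypothesis acyc : acyclic E.

Definition nancestors v := #|[set x | connect E x v]|.
Definition ndescendants v := #|[set x | connect E v x]|.

Lemma nancestors_arc u w : E u w -> nancestors u < nancestors w.
Proof.
move=> Euw; apply/proper_card/properP; split.
  by apply/subsetP => x /[!inE] /connect_trans; apply; apply: connect1.
by exists w; rewrite !inE ?connect0 //; apply: acyc.
Qed.

Lemma ndescendants_arc u w : E u w -> ndescendants w < ndescendants u.
Proof.
move=> Euw; apply/proper_card/properP; split.
  by apply/subsetP => x /[!inE]; apply: connect_trans (connect1 Euw).
by exists u; rewrite !inE ?connect0 //; apply: acyc.
Qed.

Lemma ancestor_ind (P : V -> Prop) :
  (forall v, (forall u, E u v -> P u) -> P v) -> forall v, P v.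
Proof.
move=> IH v; move: {2}(nancestors v) (leqnn (nancestors v)) => n.
elim: n v => [|n IHn] v lev.
  by move: lev; rewrite leqn0 cards_eq0 => /eqP /setP /(_ v); rewrite !inE connect0.
by apply: IH => u /nancestors_arc ltu; apply: IHn; lia.
Qed.
End Acyclic.
End Graph.

Section ChildMap.
Variables (V : finType) (E : rel V).

Definition child_map (s : V -> V) :=
  (forall u, ~~ is_leaf E u -> E u (s u)) /\ {in [pred u | ~~ is_leaf E u] &, injective s}.

Section Walk.
Hypothesis acyc : acyclic E.
Variable s : V -> V.
Hypothesis smap : child_map s.

Fixpoint walk n u :=
  if n is n'.+1 then (if is_leaf E u then [::] else s u :: walk n' (s u)) else [::].

Definition iter_nonleaf k u := forall j, j < k -> ~~ is_leaf E (iter j s u).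

Lemma walk_path n u : path E u (walk n u).
Proof.
elim: n u => [|n IH] u //=; case: ifPn => //= nleaf_u.
by rewrite smap.1 // IH.
Qed.

Lemma walk_last_leaf n u : ndescendants E u <= n -> is_leaf E (last u (walk n u)).
Proof.
elim: n u => [|n IH] u /=.
  by rewrite leqn0 cards_eq0 => /eqP /setP /(_ u); rewrite !inE connect0.
case: ifPn => //= nleaf_u le_u; apply: IH.
by have := ndescendants_arc acyc (smap.1 u nleaf_u); lia.
Qed.

Lemma mem_walk n u x : x \in u :: walk n u -> exists2 k, x = iter k s u & iter_nonleaf k u.
Proof.
elim: n u => [|n IH] u /=; first by move=> /[!inE] /eqP ->; exists 0.
case: ifPn => [_|nleaf_u]; first by move=> /[!inE] /eqP ->; exists 0.
rewrite inE => /orP[/eqP ->|/IH[k -> run_k]]; first by exists 0.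
exists k.+1; first by rewrite iterSr.
by case=> [|j] //; rewrite ltnS iterSr; apply: run_k.
Qed.

Lemma connect_iter k u : iter_nonleaf k u -> connect E u (iter k s u).
Proof.
elim: k => [|k IH] run_k; first exact: connect0.
apply: connect_trans (IH _) (connect1 (smap.1 _ (run_k k _))) => // j ltj.
by apply: run_k; apply: ltnW.
Qed.

Lemma iter_meet i j a b : iter i s a = iter j s b -> iter_nonleaf i a -> iter_nonleaf j b ->
  (exists2 k, a = iter k s b & iter_nonleaf k b) \/
  (exists2 k, b = iter k s a & iter_nonleaf k a).
Proof.
elim: i j => [|i IH] [|j] /=.
- by move=> ->; left; exists 0.
- by move=> -> _ run_j; left; exists j.+1.
- by move=> <- run_i _; right; exists i.+1.
move=> eq_s run_i run_j; apply: IH.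
- by apply: smap.2 eq_s; rewrite inE; [apply: run_i | apply: run_j].
- by move=> k ltk; apply: run_i; apply: ltnW.
- by move=> k ltk; apply: run_j; apply: ltnW.
Qed.

Lemma child_map_antichain_to_leaf : antichain_to_leaf E.
Proof.
move=> A antiA; exists (walk #|V|); split=> [a _|a b Aa Ab ab x].
  by split; [apply: walk_path | apply/walk_last_leaf/max_card].
case/mem_walk=> i -> run_i; apply/negP => /mem_walk[j eq_ij run_j].
have [[k a_k run_k]|[k b_k run_k]] := iter_meet eq_ij run_i run_j.
- by have := antiA b a Ab Aa; rewrite eq_sym ab a_k connect_iter // => /(_ isT).
- by have := antiA a b Aa Ab ab; rewrite b_k connect_iter.
Qed.
End Walk.

Lemma connect_root (F : rel V) r : acyclic E -> subrel F E ->
  (forall v, v != r -> exists u, F u v) -> forall v, connect F r v.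
Proof.
move=> acyc FE Fpar; apply: (ancestor_ind acyc) => v IH.
have [-> |/Fpar[u Fuv]] := eqVneq v r; first exact: connect0.
exact: connect_trans (IH u (FE _ _ Fuv)) (connect1 Fuv).
Qed.

Section TreeBased.
Variable r : V.
Hypothesis root_no_parent : forall u w, E u w -> w != r.

Lemma tree_based_child_map : tree_based E r -> exists s, child_map s.
Proof.
case=> F [FE F1 _ Fleaf]; pose s u := odflt u [pick w | F u w].
have Fs u : ~~ is_leaf E u -> F u (s u).
  rewrite /s; case: pickP => [//|noF]; apply: contraR => _.
  by apply: Fleaf; apply/eqP/setP => w; rewrite !inE noF.
exists s; split=> [u /Fs/FE //|u v /[!inE] nleaf_u nleaf_v eq_s].
have /card_le1_eqP F1v : #|[set x | F x (s v)]| <= 1.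
  by rewrite F1 // (root_no_parent (FE _ _ (Fs v nleaf_v))).
by apply: F1v; rewrite inE ?Fs // -eq_s Fs.
Qed.

Lemma child_map_tree_based s : acyclic E -> (forall v, v != r -> exists u, E u v) ->
  child_map s -> tree_based E r.
Proof.
move=> acyc Epar [Es s_inj]; pose par v := odflt v [pick u | E u v].
have Epar_v v : v != r -> E (par v) v.
  by rewrite /par; case: pickP => [//|noE] /Epar[u]; rewrite noE.
pose hit v := [exists u, ~~ is_leaf E u && (s u == v)].
pose F u v := (v != r) && (if hit v then ~~ is_leaf E u && (s u == v) else u == par v).
have FE : subrel F E.
  move=> u v /andP[vr]; case: ifP => _; last by move/eqP ->; apply: Epar_v.
  by case/andP=> nleaf_u /eqP <-; apply: Es.
have F1 v : v != r -> exists w, [set u | F u v] = [set w].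
  move=> vr; case: (boolP (hit v)) => [hit_v|nohit].
    have /existsP[u0 /andP[nleaf_u0 /eqP su0]] := hit_v.
    exists u0; apply/setP => x; rewrite !inE /F vr hit_v /=.
    apply/idP/eqP => [/andP[nleaf_x /eqP sx]|->]; last by rewrite nleaf_u0 su0 eqxx.
    by apply: s_inj; rewrite ?inE // sx su0.
  by exists (par v); apply/setP => x; rewrite !inE /F vr (negbTE nohit).
exists F; split=> // [v /F1[w ->]|v|v /eqP noF]; first exact: cards1.
  apply: connect_root acyc FE _ v => v /F1[w /setP/(_ w)].
  by rewrite !inE eqxx => Fwv; exists w.
apply: contraT => nleaf_v; move/setP: noF => /(_ (s v)); rewrite !inE /F.
rewrite (root_no_parent (Es v nleaf_v)) nleaf_v eqxx /=.
by case: ifP => // /negbT/existsPn/(_ v); rewrite nleaf_v eqxx.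
Qed.
End TreeBased.
End ChildMap.

Lemma ReqbP (a b : R) : reflect (a = b) (Reqb a b).
Proof. by apply: (iffP idP) => /Reqb_eq. Qed.

Section Temporal.
Variables (V : finType) (E : rel V).
Hypothesis acyc : acyclic E.
Hypothesis ret_child : forall v w1 w2, reticulation E v -> E v w1 -> E v w2 -> w1 = w2.
Hypothesis atl : antichain_to_leaf E.
Variable lam : V -> R.
Hypothesis lamE : forall u v, E u v ->
  (reticulation E v -> lam u = lam v) /\ (~~ reticulation E v -> Rlt (lam u) (lam v)).

Local Notation ret := (reticulation E).

Lemma lam_arc u v : E u v -> Rle (lam u) (lam v).
Proof.
move=> Euv; have [ret_eq tree_lt] := lamE Euv.
by case: (boolP (ret v)) => [/ret_eq ->|/tree_lt/Rlt_le]; first apply: Rle_refl.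
Qed.

Lemma lam_connect u v : connect E u v -> Rle (lam u) (lam v).
Proof.
case/connectP=> p Ep ->; elim: p u Ep => [|w p IH] u /=; first by move=> _; apply: Rle_refl.
by case/andP=> Euw /IH; apply: Rle_trans (lam_arc Euw).
Qed.

Lemma lam_connect_tree u v : connect E u v -> u != v -> ~~ ret v -> Rlt (lam u) (lam v).
Proof.
move=> Euv uv tree_v; have [y Euy Eyv] := connect_split_last Euv uv.
exact: Rle_lt_trans (lam_connect Euy) ((lamE Eyv).2 tree_v).
Qed.

Lemma ret_sibling_not_connect y1 y2 c : ret y1 -> E y1 c -> E y2 c -> y1 != y2 ->
  ~~ connect E y1 y2.
Proof.
move=> ret_y1 Ey1c Ey2c y12; apply/negP => /connect_split_first/(_ y12)[z Ey1z Ezy2].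
by move: (acyc Ey2c); rewrite -(ret_child ret_y1 Ey1z Ey1c) Ezy2.
Qed.

(* Disjoint leaf paths from two reticulations sharing a child would both have
   to pass through that child. *)
Lemma ret_parents_eq y1 y2 c : ret y1 -> ret y2 -> E y1 c -> E y2 c -> y1 = y2.
Proof.
move=> ret_y1 ret_y2 Ey1c Ey2c; apply/eqP/contraT => y12.
have anti : antichain E [set y1; y2].
  move=> u v /set2P[]-> /set2P[]-> //; rewrite ?eqxx // => _.
    exact: ret_sibling_not_connect ret_y1 Ey1c Ey2c y12.
  by apply: ret_sibling_not_connect ret_y2 Ey2c Ey1c _; rewrite eq_sym.
have [p [pA pdisj]] := atl anti.
have [y1A y2A] : y1 \in [set y1; y2] /\ y2 \in [set y1; y2] by rewrite !inE !eqxx orbT.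
have first_c y : y \in [set y1; y2] -> ret y -> E y c -> c \in y :: p y.
  move=> yA ret_y Eyc; have [Ep leaf] := pA y yA.
  have [|w [q [-> Eyw]]] := leaf_path_start Ep leaf; first by apply/nonleafP; exists c.
  by rewrite (ret_child ret_y Eyw Eyc) !inE eqxx orbT.
by have := pdisj _ _ y1A y2A y12 c (first_c _ y1A ret_y1 Ey1c); rewrite first_c.
Qed.

Definition ret_arc u w := [&& E u w, ret u & ret w].
Definition ret_head h := ret h && ~~ [exists y, ret y && E y h].
Definition head_arc u w := E u w && ~~ [exists y, ret y && E y w].
Definition feeders :=
  [set u | [&& ~~ ret u, ~~ is_leaf E u & [forall w, E u w ==> ret w]]].
Definition head_of w := odflt w [pick h | ret_head h && connect ret_arc h w].

Lemma ret_arc_functional u w1 w2 : ret_arc u w1 -> ret_arc u w2 -> w1 = w2.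
Proof. by case/and3P=> Euw1 ret_u _ /and3P[Euw2 _ _]; apply: ret_child Euw2. Qed.

Lemma ret_head_exists w : ret w -> exists2 h, ret_head h & connect ret_arc h w.
Proof.
elim/(ancestor_ind acyc): w => w IH ret_w.
case: (boolP [exists y, ret y && E y w]) => [/existsP[y /andP[ret_y Eyw]]|noparent].
  have [h head_h Chy] := IH y Eyw ret_y; exists h => //.
  by rewrite (connect_trans Chy) // connect1 // /ret_arc Eyw ret_y ret_w.
by exists w; rewrite ?connect0 // /ret_head ret_w noparent.
Qed.

Lemma head_ofP w : ret w -> ret_head (head_of w) /\ connect ret_arc (head_of w) w.
Proof.
rewrite /head_of; case: pickP => [h /andP[]//|nohead] /=.
by case/ret_head_exists=> h head_h Chw; move: (nohead h); rewrite head_h Chw.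
Qed.

Lemma leaf_path_follows_chain a p u w : path E a p -> is_leaf E (last a p) ->
  u \in a :: p -> connect ret_arc u w -> w \in a :: p.
Proof.
move=> Ep leaf pu /connectP[q Cq ->] {w}; elim: q u pu Cq => [|z q IH] u pu //=.
case/andP=> /and3P[Euz ret_u ret_z] Cq; apply: IH Cq.
have [|w Euw pw] := leaf_path_next Ep leaf pu; first by apply/nonleafP; exists z.
by rewrite -(ret_child ret_u Euw Euz) inE pw orbT.
Qed.

(* Leaf paths are forced along reticulation chains, and the chain below a head
   is totally ordered. *)
Lemma leaf_paths_meet_on_chain a pa b pb h x y :
  path E a pa -> is_leaf E (last a pa) -> path E b pb -> is_leaf E (last b pb) ->
  x \in a :: pa -> y \in b :: pb -> connect ret_arc h x -> connect ret_arc h y ->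
  exists2 z, z \in a :: pa & z \in b :: pb.
Proof.
move=> Epa leaf_a Epb leaf_b pax pby Chx Chy.
case/orP: (connect_functional_total ret_arc_functional Chx Chy) => [Cxy|Cyx].
  by exists y => //; apply: leaf_path_follows_chain Cxy.
by exists x => //; apply: leaf_path_follows_chain Cyx.
Qed.

Lemma ret_head_same_time_parent u h : lam u = lam h -> ret_head h ->
  connect E u h -> u != h -> E u h /\ ~~ ret u.
Proof.
move=> eq_lam /andP[ret_h noparent] Euh uh; have [y Euy Eyh] := connect_split_last Euh uh.
have tree_y : ~~ ret y by apply: contra noparent => ret_y; apply/existsP; exists y; rewrite ret_y.
have [->|uy] := eqVneq u y; first by split.
have := lam_connect_tree Euy uy tree_y; have := lam_arc Eyh; rewrite eq_lam; lra.
Qed.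

Lemma connect_ret_arc_lam h w : connect ret_arc h w -> lam h = lam w.
Proof.
case/connectP=> q Cq ->; elim: q h Cq => [|z q IH] h //= /andP[/and3P[Ehz _ ret_z] /IH <-].
exact: (lamE Ehz).1.
Qed.

Lemma feedersP u :
  reflect [/\ ~~ ret u, ~~ is_leaf E u & ~~ [exists w, E u w && ~~ ret w]] (u \in feeders).
Proof.
rewrite inE; apply: (iffP and3P) => -[-> -> H]; split=> //.
  by apply/existsPn => w; move/forallP/(_ w): H; case: (E u w); case: (ret w).
by apply/forallP => w; move/existsPn/(_ w): H; case: (E u w); case: (ret w).
Qed.

Lemma feeder_ret_child u w : u \in feeders -> E u w -> ret w.
Proof. by rewrite inE => /and3P[_ _ /forallP /(_ w) /implyP]. Qed.

Lemma feeder_leaf_path_head a p : a \in feeders -> path E a p -> is_leaf E (last a p) ->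
  [/\ ret (head a p), head a p \in p & lam (head a p) = lam a].
Proof.
move=> Fa Ep leaf; have [|w [q [-> Eaw]]] := leaf_path_start Ep leaf.
  by move: Fa; rewrite inE => /and3P[].
have ret_w := feeder_ret_child Fa Eaw.
by rewrite inE eqxx -(lamE Eaw).1.
Qed.

Lemma feeder_head_arc_lam u w : u \in feeders -> head_arc u w -> lam u = lam w.
Proof. by move=> Fu /andP[Euw _]; apply: (lamE Euw).1; apply: feeder_ret_child Fu Euw. Qed.

Section TimeLevel.
Variables (S : {set V}) (t : R).
Hypotheses (SF : S \subset feeders) (S_t : forall x, x \in S -> lam x = t).

Let Q := [set h | [&& ret_head h, Reqb (lam h) t & ~~ [exists x in S, E x h]]].

Lemma time_level_tree x : x \in S -> ~~ ret x.
Proof. by move/(subsetP SF); rewrite inE => /and3P[]. Qed.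

Lemma time_levelP h : reflect [/\ ret_head h, lam h = t & ~~ [exists x in S, E x h]] (h \in Q).
Proof. by rewrite inE; apply: (iffP and3P) => -[? /ReqbP ? ?]; split=> //; apply/ReqbP. Qed.

Lemma time_level_antichain : antichain E (S :|: Q).
Proof.
have lam_t a : a \in S :|: Q -> lam a = t by case/setUP=> [/S_t|/time_levelP[]].
move=> u v Au Av uv; apply/negP => Euv.
case/setUP: (Av) => [Sv|/time_levelP[head_v _ nopar]].
  have := lam_connect_tree Euv uv (time_level_tree Sv); rewrite !lam_t //; exact: Rlt_irrefl.
have lam_uv : lam u = lam v by rewrite !lam_t.
have [Euv1 tree_u] := ret_head_same_time_parent lam_uv head_v Euv uv.
case/setUP: Au => [Su|/time_levelP[/andP[ret_u _] _ _]]; last by rewrite ret_u in tree_u.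
by case/negP: nopar; apply/existsP; exists u; rewrite Su Euv1.
Qed.

Lemma time_level_hall : #|S| <= #|neighbours head_arc S|.
Proof.
have [p [pA pdisj]] := atl time_level_antichain.
pose e a := if a \in S then head a (p a) else a.
have e_entry a : a \in S :|: Q -> [/\ ret (e a), e a \in a :: p a & lam (e a) = t].
  move=> Aa; have [Ep leaf] := pA a Aa; rewrite /e; case: ifPn => [Sa|Sa].
    have [] := feeder_leaf_path_head (subsetP SF _ Sa) Ep leaf.
    by move=> ret_e pe ->; rewrite inE pe orbT S_t.
  case/setUP: Aa => [Sa'|/time_levelP[/andP[ret_a _] lam_a _]]; first by rewrite Sa' in Sa.
  by rewrite inE eqxx.
pose f a := head_of (e a).
have f_range a : a \in S :|: Q -> f a \in Q :|: neighbours head_arc S.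
  case/e_entry=> /head_ofP[head_f Cfe] _ lam_e; rewrite in_setU.
  case: (boolP [exists x in S, E x (f a)]) => [/existsP[x /andP[Sx Exf]]|nopar].
    by apply/orP; right; apply/neighboursP; exists x; rewrite // /head_arc Exf (andP head_f).2.
  by apply/orP; left; apply/time_levelP; split; rewrite // -lam_e (connect_ret_arc_lam Cfe).
have f_inj : {in S :|: Q &, injective f}.
  move=> a b Aa Ab fab; apply/eqP/contraT => ab.
  have [ret_ea pa_e _] := e_entry a Aa; have [ret_eb pb_e _] := e_entry b Ab.
  have [Epa leaf_a] := pA a Aa; have [Epb leaf_b] := pA b Ab.
  have Cfa : connect ret_arc (f b) (e a) by rewrite -fab; apply: (head_ofP ret_ea).2.
  have [z pa_z pb_z] := leaf_paths_meet_on_chain Epa leaf_a Epb leaf_b pa_e pb_e Cfa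
    (head_ofP ret_eb).2.
  by have := pdisj a b Aa Ab ab z pa_z; rewrite pb_z.
have SQ0 : S :&: Q = set0.
  apply/setP => x; rewrite in_setI in_set0; apply/negbTE/andP => -[Sx /time_levelP[]].
  by case/andP=> ret_x _ _ _; move: (time_level_tree Sx); rewrite ret_x.
have sub_fA : f @: (S :|: Q) \subset Q :|: neighbours head_arc S.
  by apply/subsetP => _ /imsetP[a Aa ->]; apply: f_range.
move: (subset_leq_card sub_fA) (leq_card_setU Q (neighbours head_arc S)).
by rewrite card_in_imset // cardsU SQ0 cards0 subn0 => ? []; lia.
Qed.
End TimeLevel.

Lemma feeders_hall : hall_condition head_arc feeders.
Proof.
move=> S; move: {2}#|S| (leqnn #|S|) => n; elim: n S => [|n IH] S leS SF.
  by move: leS; rewrite leqn0 => /eqP ->.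
have [->|[x0 Sx0]] := set_0Vmem S; first by rewrite cards0.
pose P := [set x | Reqb (lam x) (lam x0)].
have hall_SP : #|S :&: P| <= #|neighbours head_arc (S :&: P)|.
  apply: (@time_level_hall _ (lam x0)); first exact: subset_trans (subsetIl S P) SF.
  by move=> x; rewrite !inE => /andP[_ /ReqbP].
have hall_SnP : #|S :\: P| <= #|neighbours head_arc (S :\: P)|.
  apply: IH; last exact: subset_trans (subsetDl S P) SF.
  have : 0 < #|S :&: P| by rewrite card_gt0; apply/set0Pn; exists x0; rewrite !inE Sx0; apply/ReqbP.
  by have := cardsID P S; lia.
have disjN : neighbours head_arc (S :&: P) :&: neighbours head_arc (S :\: P) = set0.
  apply/setP => w; rewrite in_setI in_set0; apply/negbTE/andP.
  case=> /neighboursP[x SPx xw] /neighboursP[y SPy yw].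
  move: SPx SPy; rewrite !inE => /andP[Sx /ReqbP x_t] /andP[/negP y_nt Sy].
  apply: y_nt; apply/ReqbP; rewrite (feeder_head_arc_lam (subsetP SF _ Sy) yw) -x_t.
  exact/esym/(feeder_head_arc_lam (subsetP SF _ Sx) xw).
rewrite -{2}(setID S P) neighboursU cardsU disjN cards0 subn0.
by have := cardsID P S; lia.
Qed.

Definition pick_child (P : pred V) u := odflt u [pick w | E u w && P w].

Lemma pick_childP (P : pred V) u : [exists w, E u w && P w] ->
  E u (pick_child P u) && P (pick_child P u).
Proof. by case/existsP=> w Pw; rewrite /pick_child; case: pickP => [//|/(_ w)]; rewrite Pw. Qed.

Section MatchingChildMap.
Variable m : V -> V.
Hypothesis m_match : matching head_arc feeders m.

Definition matching_child u :=
  if ret u then pick_child predT u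
  else if [exists w, E u w && ~~ ret w] then pick_child (predC ret) u
  else m u.

Lemma matching_child_arc u : ~~ is_leaf E u -> E u (matching_child u).
Proof.
move=> nleaf_u; rewrite /matching_child; case: ifPn => [_|tree_u].
  have /nonleafP[w Euw] := nleaf_u.
  have /(@pick_childP predT)/andP[] // : [exists w, E u w && predT w].
  by apply/existsP; exists w; rewrite Euw.
case: ifPn => [/(@pick_childP (predC ret))/andP[]//|notree].
have Fu : u \in feeders by apply/feedersP.
by case/andP: (m_match.1 u Fu).
Qed.

Lemma matching_child_ret u : ~~ is_leaf E u -> ret (matching_child u) ->
  ret u \/ (u \in feeders /\ matching_child u = m u).
Proof.
move=> nleaf_u; rewrite /matching_child; case: ifPn => [ret_u|tree_u]; first by left.
case: ifPn => [/(@pick_childP (predC ret))/andP[_ /negP]//|notree _].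
by right; split=> //; apply/feedersP.
Qed.

Lemma matching_child_injective :
  {in [pred u | ~~ is_leaf E u] &, injective matching_child}.
Proof.
move=> u v /[!inE] nleaf_u nleaf_v eq_s.
have Eus := matching_child_arc nleaf_u; have Evs := matching_child_arc nleaf_v.
rewrite eq_s in Eus; case: (boolP (ret (matching_child v))) => [ret_s|tree_s]; last first.
  have /card_le1_eqP : #|[set x | E x (matching_child v)]| <= 1 by rewrite leqNgt.
  by apply; rewrite inE.
have ret_su : ret (matching_child u) by rewrite eq_s.
case: (matching_child_ret nleaf_u ret_su) => [ret_u|[Fu su]];
  case: (matching_child_ret nleaf_v ret_s) => [ret_v|[Fv sv]].
- exact: ret_parents_eq ret_u ret_v Eus Evs.
- have /andP[_ /existsP[]] := m_match.1 v Fv; rewrite -sv; by exists u; rewrite ret_u.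
- have /andP[_ /existsP[]] := m_match.1 u Fu; rewrite -su eq_s; by exists v; rewrite ret_v.
- by apply: m_match.2; rewrite // -su -sv.
Qed.
End MatchingChildMap.

Lemma temporal_child_map : exists s, child_map E s.
Proof.
have [m m_match] := hall_marriage feeders_hall.
by exists (matching_child m); split; [apply: matching_child_arc | apply: matching_child_injective].
Qed.
End Temporal.

Theorem theorem4 (V : finType) (E : rel V) (r : V) :
  phylo_network E r -> temporal E ->
  (tree_based E r <-> antichain_to_leaf E).
Proof.
move=> net [lam lamE]; have acyc : acyclic E := net.1.
split=> [tb|atl].
- have [s smap] := tree_based_child_map (phylo_arc_neq_root net) tb.
  exact: (child_map_antichain_to_leaf acyc smap).
- have [s smap] := temporal_child_map acyc (phylo_reticulation_child net) atl lamE.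
  exact: (child_map_tree_based (phylo_arc_neq_root net) acyc (phylo_parent net) smap).
Qed.
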